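(* Let $\mathcal{D}_{\text{SEQ}}$ be a temporal sequence database and let $(E_i,E_j)$ be a pair of events occurring in a 2-event temporal pattern $P$ (i.e. $P=\langle (r,E_i,E_j)\rangle$ for some temporal relation $r$). Then $\textit{conf}(P)\le \textit{conf}(E_i,E_j)$.
   Context: A temporal event is a pair $E=(\omega,T)$ with $\omega$ a symbol and $T$ a set of time intervals; an instance of $E$ is $e=(\omega,[t_s,t_e])$ with $[t_s,t_e]\in T$, and $E_{\triangleright e}$ denotes that $e$ is an instance of $E$. The set $\Re$ of temporal relations consists of Follows, Contains, Overlaps, each a condition on the endpoints of a pair of instances $(e_i,e_j)$ (with buffer $\epsilon>0$ and minimal overlap $d_o$, in the paper's notation $t\pm\epsilon$): Follows iff $t_{e_i}\pm\epsilon\le t_{s_j}$; Contains iff $(t_{s_i}\le t_{s_j})\wedge(t_{e_i}\pm\epsilon\ge t_{e_j})$; Overlaps iff $(t_{s_i}<t_{s_j})\wedge(t_{e_i}\pm\epsilon<t_{e_j})\wedge(t_{e_i}-t_{s_j}\ge d_o\pm\epsilon)$. A temporal pattern is a list of triples $(r_{ij},E_i,E_j)$ with $r_{ij}\in\Re$. A temporal sequence is a list of event instances ordered by start time; a temporal sequence database $\mathcal{D}_{\text{SEQ}}$ is a finite collection of temporal sequences. $S$ supports a pattern $P$ iff $|S|\ge2$ and for every triple $(r_{ij},E_i,E_j)\in P$ there exist instances $e_l,e_m$ in $S$ with $r_{ij}$ holding between $E_{i_{\triangleright e_l}}$ and $E_{j_{\triangleright e_m}}$. $\textit{supp}(P)$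 is the number of sequences of $\mathcal{D}_{\text{SEQ}}$ supporting $P$; $\textit{supp}(E)$ is the number of sequences containing an instance of $E$; $\textit{supp}(E_i,E_j)$ is the number of sequences containing an instance of $E_i$ and an instance of $E_j$. Confidence: $\textit{conf}(P)=\textit{supp}(P)/\max_{E_k\in P}\textit{supp}(E_k)$, and $\textit{conf}(E_i,E_j)=\textit{supp}(E_i,E_j)/\max\{\textit{supp}(E_i),\textit{supp}(E_j)\}$. *)

From HB Require Import structures.
From mathcomp Require Import all_boot all_order all_algebra.
Set Implicit Arguments. Unset Strict Implicit. Unset Printing Implicit Defensive.
Import Order.TTheory GRing.Theory Num.Theory.
Local Open Scope ring_scope.

Section Temporal.
Variables (Sym : eqType) (R : realFieldType).

(* A temporal event E = (omega, T): a symbol and a set of time intervals,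
   an interval [ts, te] being encoded by the pair (ts, te). *)
Record event := Event { ev_sym : Sym; ev_T : pred (R * R) }.

Record instance := Instance { in_sym : Sym; in_s : R; in_e : R }.

Definition is_instance (E : event) (e : instance) : bool :=
  (in_sym e == ev_sym E) && ((in_s e, in_e e) \in ev_T E).

Inductive trel := Follows | Contains | Overlaps.

(* Conditions on endpoints, buffer eps and minimal overlap d_o. *)
Definition rel_holds (eps d_o : R) (r : trel) (ei ej : instance) : bool :=
  match r with
  | Follows => in_e ei - eps <= in_s ej
  | Contains => (in_s ei <= in_s ej) && (in_e ej <= in_e ei + eps)
  | Overlaps => [&& in_s ei < in_s ej, in_e ei - eps < in_e ej
                  & d_o - eps <= in_e ei - in_s ej]
  end.

Record triple := Triple { tr_rel : trel; tr_Ei : event; tr_Ej : event }.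
Definition pattern := seq triple.

Definition tseq := seq instance.
Definition is_tseq (S : tseq) : bool := sorted (fun a b => in_s a <= in_s b) S.
Definition tdb := seq tseq.

Definition supports (eps d_o : R) (S : tseq) (P : pattern) : bool :=
  (2 <= size S)%N &&
  all (fun t => has (fun el => has (fun em =>
          [&& is_instance (tr_Ei t) el, is_instance (tr_Ej t) em
            & rel_holds eps d_o (tr_rel t) el em]) S) S) P.

Definition supp_pat (eps d_o : R) (D : tdb) (P : pattern) : nat :=
  count (fun S => supports eps d_o S P) D.

Definition supp_ev (D : tdb) (E : event) : nat :=
  count (fun S => has (is_instance E) S) D.

Definition supp_pair (D : tdb) (Ei Ej : event) : nat :=
  count (fun S => has (is_instance Ei) S && has (is_instance Ej) S) D.

Definition max_supp_pat (D : tdb) (P : pattern) : nat :=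
  \max_(t <- P) maxn (supp_ev D (tr_Ei t)) (supp_ev D (tr_Ej t)).

(* Confidences (division by 0 yields 0 in a field, by MathComp convention). *)
Definition conf_pat (eps d_o : R) (D : tdb) (P : pattern) : R :=
  (supp_pat eps d_o D P)%:R / (max_supp_pat D P)%:R.

Definition conf_pair (D : tdb) (Ei Ej : event) : R :=
  (supp_pair D Ei Ej)%:R / (maxn (supp_ev D Ei) (supp_ev D Ej))%:R.

End Temporal.

From mathcomp Require Import all_boot all_order all_algebra.
Import Order.TTheory GRing.Theory Num.Theory.
Local Open Scope ring_scope.

(* A sequence supporting P contains instances of both events of each triple of
   P, so supp(P) <= supp(E_i, E_j); for P = <(r, E_i, E_j)> both confidences
   have the denominator max(supp E_i, supp E_j). *)

Lemma has_cst (T : Type) (b : bool) (s : seq T) :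
  has (fun=> b) s = (0 < size s)%N && b.
Proof. by elim: s => //= _ s ->; case: b; rewrite ?andbF. Qed.

Section Support.
Variables (Sym : eqType) (R : realFieldType) (eps d_o : R).

Lemma supports_has_events (S : tseq Sym R) (P : pattern Sym R) :
  supports eps d_o S P ->
  all (fun t => has (is_instance (tr_Ei t)) S && has (is_instance (tr_Ej t)) S) P.
Proof.
case/andP=> _; apply: sub_all => t /= HS; apply/andP; split.
- apply: sub_has HS => el Hel.
  have : has (fun=> is_instance (tr_Ei t) el) S by apply: sub_has Hel => em /and3P[].
  by rewrite has_cst => /andP[].
- have : has (fun=> has (is_instance (tr_Ej t)) S) S.
    by apply: sub_has HS => el; apply: sub_has => em /and3P[].
  by rewrite has_cst => /andP[].
Qed.

Lemma supp_pat_le_supp_pair (D : tdb Sym R) t (P : pattern Sym R) :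
  (supp_pat eps d_o D (t :: P) <= supp_pair D (tr_Ei t) (tr_Ej t))%N.
Proof. by apply: sub_count => S /supports_has_events /andP[]. Qed.

End Support.

Lemma max_supp_pat1 (Sym : eqType) (R : realFieldType) (D : tdb Sym R) r Ei Ej :
  max_supp_pat D [:: Triple r Ei Ej] = maxn (supp_ev D Ei) (supp_ev D Ej).
Proof. exact: big_seq1. Qed.

Theorem lemma3 (Sym : eqType) (R : realFieldType) (eps d_o : R)
  (D : tdb Sym R) (r : trel) (Ei Ej : event Sym R) :
  0 < eps ->
  all (@is_tseq Sym R) D ->
  conf_pat eps d_o D [:: Triple r Ei Ej] <= conf_pair D Ei Ej.
Proof.
move=> _ _; rewrite /conf_pat /conf_pair max_supp_pat1.
apply: ler_wpM2r; first by rewrite invr_ge0 ler0n.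
by rewrite ler_nat; exact: supp_pat_le_supp_pair.
Qed.
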